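(* Let $n=p_1p_2\cdots p_r$, where $r\geq 3$ and $p_1<p_2<\cdots<p_r$ are primes. Then $$\delta(\mathcal{P}(C_n))=\min\{\deg(p_sp_{s+1}\cdots p_r) : 2\leq s\leq r\}.$$
   Context: For a finite group $G$, the power graph $\mathcal{P}(G)$ is the simple undirected graph with vertex set $G$ in which two distinct vertices are adjacent if one is an integral power of the other. $C_n$ denotes the cyclic group of order $n$, identified with $\mathbb{Z}_n=\{0,1,\ldots,n-1\}$, so a positive divisor $d<n$ of $n$ is regarded as the element $d\in\mathbb{Z}_n$. $\deg(a)$ is the degree of vertex $a$ in $\mathcal{P}(C_n)$ and $\delta$ denotes minimum degree. *)

From mathcomp Require Import all_boot.
Set Implicit Arguments. Unset Strict Implicit. Unset Printing Implicit Defensive.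

(* The cyclic group C_n is Z_n = {0,...,n-1} with addition mod n.
   The integral powers of a in C_n (additively) are the multiples k*a mod n,
   k an integer; since k only matters mod n, k ranges over 0..n-1. *)
Definition is_power (n a b : nat) : bool :=
  [exists k : 'I_n, b == (k * a) %% n].

Definition pg_adj (n a b : nat) : bool :=
  (a != b) && (is_power n a b || is_power n b a).

Definition pg_deg (n a : nat) : nat :=
  #|[set b : 'I_n | pg_adj n (a %% n) (val b)]|.

(* Minimum degree of P(C_n) (n >= 1); n is an upper bound for all degrees. *)
Definition pg_mindeg (n : nat) : nat :=
  \big[minn/n]_(a < n) pg_deg n a.

From mathcomp Require Import all_boot zify.
Set Implicit Arguments. Unset Strict Implicit.

(* An element a of Z_n of order m (so gcd(a, n) = n/m) is adjacent to the
   m - 1 other elements of <a> and to the (n/m - 1) phi(m) elements b outside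
   <a> with a in <b>.  Since n is squarefree this gives
     deg(a) = (m - 1) + (n/m - 1) phi(m)   (pg_deg_order),
   a function deg_of_order n m of the order alone.

   For a divisor m of n with k prime factors, pairing the i-th smallest prime
   of m with p_i shows that the prefix product D = p_1 ... p_k is
   "totient-smaller" than m: phi(D) <= phi(m), D - phi(D) <= m - phi(m) and
   phi(D)/D <= phi(m)/m (divisor_totient_smaller); this forces
   deg_of_order n D <= deg_of_order n m (deg_of_order_smaller).  So the minimum
   degree is attained at an order p_1 ... p_k.  The orders 1 and n (k = 0, r)
   give degree n - 1, which is beaten by the order p_1, and for 1 <= k < r the
   element p_(k+1) ... p_r has order p_1 ... p_k (suffix_deg), which yields the
   formula. *)

Lemma card_ord_count n (Q : pred nat) :
  #|[set b : 'I_n | Q (val b)]| = count Q (iota 0 n).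
Proof.
rewrite cardsE cardE -val_enum_ord count_map /enum_mem size_filter.
by rewrite (@eq_filter _ _ predT) // filter_predT.
Qed.

Lemma totient_count m : totient m = count (coprime m) (iota 0 m).
Proof. by rewrite totient_count_coprime -sumn_count sumnE big_map /index_iota subn0. Qed.

Lemma totient_le m : totient m <= m.
Proof. by rewrite totient_count; apply: leq_trans (count_size _ _) _; rewrite size_iota. Qed.

Lemma count_periodic m g (P : pred nat) : 0 < m ->
  count (fun b => P (b %% m)) (iota 0 (g * m)) = g * count P (iota 0 m).
Proof.
move=> m_gt0; elim: g => [|g IH]; first by rewrite mul0n.
rewrite mulSnr iotaD count_cat IH add0n -(addn0 (g * m)) iotaDl count_map.
rewrite mulSnr; congr (_ + _); apply: eq_in_count => i /=.
by rewrite mem_iota add0n => /andP[_ lt_im]; rewrite modnMDl modn_small.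
Qed.

Lemma count_multiples g m (P : pred nat) : 0 < g ->
  count (fun b => (g %| b) && P b) (iota 0 (m * g)) =
  count (fun c => P (c * g)) (iota 0 m).
Proof.
move=> g_gt0; elim: m => [|m IH]; first by rewrite mul0n.
rewrite mulSnr iotaD count_cat IH add0n -(addn0 (m * g)) iotaDl count_map.
rewrite -addn1 iotaD count_cat /= add0n addn0; congr (_ + _).
case: g g_gt0 {IH} => [//|g] _.
rewrite -add1n iotaD count_cat /= addn0 dvdn_addr ?dvdn_mull // dvdn0 addn0.
rewrite (eq_in_count (a2 := pred0)) ?count_pred0 ?addn0 // => i.
rewrite mem_iota => /andP[i_gt0 lt_i] /=; rewrite dvdn_addr ?dvdn_mull //.
by case dvd_i: (g.+1 %| i) => //=; have := dvdn_leq i_gt0 dvd_i; lia.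
Qed.

Lemma count_split (T : Type) (P Q : pred T) s :
  count P s = count (fun x => Q x && P x) s + count (fun x => ~~ Q x && P x) s.
Proof. by elim: s => [|x s IH] //=; rewrite IH; case: (Q x); case: (P x) => /=; lia. Qed.

Lemma is_powerE n a b : 0 < n -> b < n -> is_power n a b = (gcdn a n %| b).
Proof.
move=> n_gt0 lt_bn; apply/existsP/idP.
  case=> k /eqP ->; rewrite /dvdn modn_dvdm ?dvdn_gcdr //.
  by rewrite -/(dvdn _ _) dvdn_mull ?dvdn_gcdl.
have [->|a_gt0] := posnP a.
  rewrite gcd0n => dvd_nb; suff b0 : b = 0 by exists (Ordinal n_gt0); rewrite b0 mul0n mod0n.
  by case: b lt_bn dvd_nb => // b lt_bn /(dvdn_leq (ltn0Sn b)); rewrite leqNgt lt_bn.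
case/dvdnP=> c def_b; subst b; have [u v Euv _] := egcdnP n a_gt0.
exists (Ordinal (ltn_pmod (c * u) n_gt0)) => /=.
by rewrite modnMml -mulnA Euv mulnDr mulnA modnMDl modn_small.
Qed.

Lemma gcd_dvd_coprime b g m : coprime g m -> (gcdn b (g * m) %| g) = coprime b m.
Proof.
move=> cop_gm; apply/idP/idP => [dvd_g|cop_bm]; last by rewrite mulnC Gauss_gcdr // dvdn_gcdr.
rewrite /coprime -dvdn1 -(eqP cop_gm) dvdn_gcd dvdn_gcdr andbT.
apply: dvdn_trans dvd_g; rewrite dvdn_gcd dvdn_gcdl /=.
exact: dvdn_trans (dvdn_gcdr _ _) (dvdn_mull _ _).
Qed.

(* If a has order m and gcd(a, n) = n/m is prime to m, the neighbours of a are
   the multiples of n/m (the subgroup <a>) and the elements prime to m (those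
   generating a subgroup that contains <a>). *)
Lemma pg_adjE n a b : 0 < n -> a < n -> b < n ->
  coprime (gcdn a n) (n %/ gcdn a n) ->
  pg_adj n a b = (b != a) && ((gcdn a n %| b) || coprime b (n %/ gcdn a n)).
Proof.
move=> n_gt0 lt_an lt_bn cop; rewrite /pg_adj !is_powerE // eq_sym.
congr (_ && (_ || _)).
have -> : (gcdn b n %| a) = (gcdn b n %| gcdn a n).
  by rewrite dvdn_gcd dvdn_gcdr andbT.
by rewrite -(gcd_dvd_coprime b cop) mulnC divnK ?dvdn_gcdr.
Qed.

Definition deg_of_order (n m : nat) : nat := m.-1 + (n %/ m).-1 * totient m.

Lemma count_neighbours g m : 0 < g -> 0 < m -> coprime g m ->
  count (fun b => (g %| b) || coprime b m) (iota 0 (m * g)) =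
  m + g.-1 * totient m.
Proof.
move=> g_gt0 m_gt0 cop_gm.
have multiples : count (fun b => g %| b) (iota 0 (m * g)) = m.
  rewrite -(@eq_count _ (fun b => (g %| b) && true)) => [|b]; last by rewrite andbT.
  by rewrite count_multiples // count_predT size_iota.
have units : count (fun b => coprime b m) (iota 0 (m * g)) = g * totient m.
  rewrite mulnC -(@eq_count _ (fun b => coprime (b %% m) m)) => [|b]; last first.
    by rewrite /= coprime_modl.
  rewrite (count_periodic _ (fun c => coprime c m)) // totient_count; congr (_ * _).
  by apply: eq_count => c; rewrite /= coprime_sym.
have both : count (predI (fun b => g %| b) (fun b => coprime b m))
    (iota 0 (m * g)) = totient m.
  rewrite count_multiples // totient_count; apply: eq_count => c /=.
  by rewrite coprimeMl cop_gm andbT coprime_sym.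
have := count_predUI (fun b => g %| b) (fun b => coprime b m) (iota 0 (m * g)).
rewrite multiples units both => union.
apply/eqP; rewrite -(eqn_add2r (totient m)) union -subn1 mulnBl mul1n.
by have := leq_pmull (totient m) g_gt0; lia.
Qed.

Lemma pg_deg_order n a : 0 < n -> a < n ->
  coprime (gcdn a n) (n %/ gcdn a n) ->
  pg_deg n a = deg_of_order n (n %/ gcdn a n).
Proof.
move=> n_gt0 lt_an cop; set g := gcdn a n in cop *; set m := n %/ g in cop *.
have g_gt0 : 0 < g by rewrite gcdn_gt0 n_gt0 orbT.
have nE : n = m * g by rewrite divnK // dvdn_gcdr.
have m_gt0 : 0 < m by move: n_gt0; rewrite nE muln_gt0 => /andP[].
pose Z b := (g %| b) || coprime b m.
rewrite /pg_deg modn_small // card_ord_count.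
rewrite (@eq_in_count _ _ (fun b => (b != a) && Z b)) => [|b]; last first.
  by rewrite mem_iota add0n /= => lt_bn; rewrite pg_adjE.
have a_in_Z : count (fun b => (b == a) && Z b) (iota 0 n) = 1.
  rewrite (@eq_in_count _ _ (pred1 a)) => [|b _] /=.
    by rewrite count_uniq_mem ?iota_uniq // mem_iota add0n lt_an.
  by case: eqP => //= ->; rewrite /Z dvdn_gcdl.
have Z_count : count Z (iota 0 n) = m + g.-1 * totient m.
  by rewrite /Z nE count_neighbours.
have := count_split Z (pred1 a) (iota 0 n); rewrite a_in_Z => split_Z.
apply/eqP; rewrite -(eqn_add2l 1) -split_Z Z_count /deg_of_order nE mulKn //.
by apply/eqP; lia.
Qed.

(* D is totient-smaller than m when it has at most as many
   units (phi(D) <= phi(m)) and non-units (D - phi(D) <= m - phi(m)) as m,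
   and a larger proportion of non-units, i.e. phi(D)/D <= phi(m)/m. *)
Definition totient_smaller (D m : nat) : Prop :=
  [/\ totient D <= totient m, D - totient D <= m - totient m
    & totient D * (m - totient m) <= totient m * (D - totient D)].

(* The arithmetic behind totient_smaller_mul: t, u count units, x, y count
   non-units, and the new primes are a.+1 and b.+1. *)
Lemma totient_smaller_mul_arith t u x y a b :
  t <= u -> x <= y -> t * y <= u * x -> b <= a ->
  [/\ t * b <= u * a, x * b.+1 + t <= y * a.+1 + u
    & t * b * (y * a.+1 + u) <= u * a * (x * b.+1 + t)].
Proof.
move=> le_tu le_xy le_ty le_ba; split.
- exact: leq_mul.
- by apply: leq_add => //; apply: leq_mul.
- have le_ba' : b * a.+1 <= a * b.+1 by nia.
  rewrite !mulnDr; apply: leq_add.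
    by have := leq_mul le_ty le_ba'; rewrite -!mulnA (mulnCA y) (mulnCA x).
  by have := leq_mul (leq_mul (leqnn t) le_ba) (leqnn u); lia.
Qed.

(* For q = b.+1 prime to D with t = phi(D), the non-units of Z_(D q) number
   D q - t b = (D - t) q + t. *)
Lemma nonunits_mul_prime D t b : t <= D -> D * b.+1 - t * b = (D - t) * b.+1 + t.
Proof. by move=> le_tD; rewrite -{1}(subnK le_tD) mulnDl (mulnSr t) addnCA addKn. Qed.

Lemma totient_smaller_mul D m q' q : totient_smaller D m -> prime q' -> prime q ->
  q' <= q -> coprime D q' -> coprime m q -> totient_smaller (D * q') (m * q).
Proof.
move=> [le_t le_x le_r] pr_q' pr_q le_q cop_D cop_m.
rewrite /totient_smaller !totient_coprime // (totient_prime pr_q) (totient_prime pr_q').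
have [a def_q] : exists a, q = a.+1 by exists q.-1; rewrite prednK ?prime_gt0.
have [b def_q'] : exists b, q' = b.+1 by exists q'.-1; rewrite prednK ?prime_gt0.
subst q q'; rewrite ltnS in le_q; rewrite /= !nonunits_mul_prime ?totient_le //.
exact: totient_smaller_mul_arith.
Qed.

Lemma deg_of_order_smaller n D m : 0 < n -> D %| n -> m %| n ->
  totient_smaller D m -> deg_of_order n D <= deg_of_order n m.
Proof.
move=> n_gt0 dvd_D dvd_m [le_t le_x le_r].
have [D_gt0 m_gt0] := (dvdn_gt0 n_gt0 dvd_D, dvdn_gt0 n_gt0 dvd_m).
have [le_tD le_um] := (totient_le D, totient_le m).
have le_ratio : totient D * m <= totient m * D.
  move: le_r; rewrite !mulnBr.
  have := leq_mul (leqnn (totient D)) le_um; have := leq_mul (leqnn (totient m)) le_tD.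
  lia.
set u := n %/ m; set v := n %/ D.
have def_n_m : n = u * m by rewrite divnK.
have def_n_D : n = v * D by rewrite divnK.
have v_gt0 : 0 < v by rewrite divn_gt0 // dvdn_leq.
have le_units : v * totient D <= u * totient m.
  rewrite -(leq_pmul2r m_gt0); apply: (@leq_trans (v * (totient m * D))).
    by rewrite -mulnA leq_mul2l le_ratio orbT.
  by rewrite mulnCA -def_n_D def_n_m mulnCA mulnA.
rewrite /deg_of_order -!subn1 !mulnBl !mul1n.
by have := leq_pmull (totient D) v_gt0; lia.
Qed.

Lemma deg_of_order1 n : deg_of_order n 1 = n.-1.
Proof. by rewrite /deg_of_order divn1 muln1. Qed.

Lemma deg_of_order_id n : 0 < n -> deg_of_order n n = n.-1.
Proof. by move=> n_gt0; rewrite /deg_of_order divnn n_gt0 addn0. Qed.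

Lemma deg_of_order_prime n q : 0 < n -> prime q -> q %| n ->
  deg_of_order n q <= n.-1.
Proof.
move=> n_gt0 pr_q dvd_q; rewrite /deg_of_order totient_prime //.
have q_gt1 := prime_gt1 pr_q; have def_n : n = n %/ q * q by rewrite divnK.
have v_gt0 : 0 < n %/ q by rewrite divn_gt0 ?prime_gt0 // dvdn_leq.
by rewrite -mulSn prednK // {2}def_n -subn1 mulnBr muln1; lia.
Qed.

Definition prefix_prod (p : nat -> nat) (j : nat) : nat := \prod_(1 <= i < j.+1) p i.

Lemma prefix_prod0 p : prefix_prod p 0 = 1.
Proof. by rewrite /prefix_prod big_geq. Qed.

Lemma prefix_prodS p j : prefix_prod p j.+1 = prefix_prod p j * p j.+1.
Proof. by rewrite /prefix_prod big_nat_recr. Qed.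

Lemma prefix_prod_dvd p k j : k <= j -> prefix_prod p k %| prefix_prod p j.
Proof.
elim: j => [|j IH]; first by rewrite leqn0 => /eqP ->.
rewrite leq_eqVlt => /orP[/eqP -> //|]; rewrite ltnS => le_kj.
by rewrite prefix_prodS dvdn_mulr // IH.
Qed.

Lemma prefix_prod_split p j s : 0 < s <= j.+1 ->
  prefix_prod p j = prefix_prod p s.-1 * \prod_(s <= i < j.+1) p i.
Proof.
by case/andP=> s_gt0 le_sj; rewrite /prefix_prod prednK // -big_cat_nat.
Qed.

Section SquarefreeProduct.

Variables (r : nat) (p : nat -> nat).
Hypothesis p_prime : forall i, 1 <= i <= r -> prime (p i).
Hypothesis p_incr : forall i, 1 <= i < r -> p i < p i.+1.

Lemma p_ltn i j : 1 <= i -> i < j -> j <= r -> p i < p j.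
Proof.
move=> i_gt0 lt_ij le_jr.
apply: (homo_ltn_in (D := [pred k | 1 <= k <= r]) (f := p) (r := fun x y => x < y)).
- exact: ltn_trans.
- move=> x y x_in y_in k /andP[lt_xk lt_ky]; rewrite !inE in x_in y_in *; lia.
- move=> k k_in k1_in; rewrite !inE in k_in k1_in; apply: p_incr; lia.
- by rewrite inE i_gt0; lia.
- by rewrite inE; lia.
- exact: lt_ij.
Qed.

Lemma prefix_prod_gt0 j : j <= r -> 0 < prefix_prod p j.
Proof.
elim: j => [|j IH] le_jr; first by rewrite prefix_prod0.
by rewrite prefix_prodS muln_gt0 IH ?(ltnW le_jr) // prime_gt0 // p_prime.
Qed.

Lemma coprime_prefix k j : j < k -> k <= r -> coprime (p k) (prefix_prod p j).
Proof.
elim: j => [|j IH] lt_jk le_kr; first by rewrite prefix_prod0 coprimen1.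
have pr_k : prime (p k) by apply: p_prime; lia.
have pr_j : prime (p j.+1) by apply: p_prime; lia.
rewrite prefix_prodS coprimeMr IH ?(ltnW lt_jk) //= prime_coprime // dvdn_prime2 //.
by have := p_ltn (isT : 0 < j.+1) lt_jk le_kr; lia.
Qed.

Lemma prefix_squarefree j g : j <= r ->
  g %| prefix_prod p j -> coprime g (prefix_prod p j %/ g).
Proof.
elim: j g => [|j IH] g le_jr; first by rewrite prefix_prod0 dvdn1 => /eqP ->.
have pr_q : prime (p j.+1) by apply: p_prime; rewrite le_jr.
have cop_q := coprime_prefix (ltnSn j) le_jr.
have q_gt0 := prime_gt0 pr_q.
rewrite prefix_prodS; have [dvd_qg|ndvd_qg] := boolP (p j.+1 %| g) => dvd_g.
  have [g' def_g] := dvdnP dvd_qg; subst g.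
  have dvd_g' : g' %| prefix_prod p j by rewrite -(dvdn_pmul2r q_gt0).
  rewrite divnMr // coprimeMl IH ?(ltnW le_jr) //=.
  by apply: coprime_dvdr cop_q; exact: dvdn_div.
have cop_gq : coprime g (p j.+1) by rewrite coprime_sym prime_coprime.
rewrite Gauss_dvdl // in dvd_g.
by rewrite -divn_mulAC // coprimeMr IH ?(ltnW le_jr).
Qed.

(* Every divisor m of p_1 ... p_j is totient-smaller than some p_1 ... p_k,
   k <= j: pair the primes of m, in increasing order, with p_1, p_2, .... *)
Lemma divisor_totient_smaller j m : j <= r -> m %| prefix_prod p j ->
  exists2 k, k <= j & totient_smaller (prefix_prod p k) m.
Proof.
elim: j m => [|j IH] m le_jr.
  by rewrite prefix_prod0 dvdn1 => /eqP ->; exists 0; rewrite ?prefix_prod0.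
have pr_q : prime (p j.+1) by apply: p_prime; rewrite le_jr.
have cop_q := coprime_prefix (ltnSn j) le_jr.
rewrite prefix_prodS; have [dvd_qm|ndvd_qm] := boolP (p j.+1 %| m) => dvd_m; last first.
  have cop_mq : coprime m (p j.+1) by rewrite coprime_sym prime_coprime.
  rewrite Gauss_dvdl // in dvd_m.
  by have [k le_kj small] := IH m (ltnW le_jr) dvd_m; exists k => //; apply: leqW.
have [m' def_m] := dvdnP dvd_qm; subst m.
have dvd_m' : m' %| prefix_prod p j by rewrite -(dvdn_pmul2r (prime_gt0 pr_q)).
have [k le_kj small] := IH m' (ltnW le_jr) dvd_m'.
have le_k1r : k.+1 <= r by apply: leq_ltn_trans le_jr.
exists k.+1 => //; rewrite prefix_prodS; apply: totient_smaller_mul => //.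
- exact: p_prime.
- move: le_kj; rewrite leq_eqVlt => /orP[/eqP -> //|lt_kj].
  exact/ltnW/p_ltn.
- by rewrite coprime_sym coprime_prefix.
- by rewrite coprime_sym (coprime_dvdr dvd_m' cop_q).
Qed.

Let n := prefix_prod p r.

Lemma n_gt0 : 0 < n.
Proof. exact: prefix_prod_gt0. Qed.

Lemma pg_deg_prefix a : a < n -> pg_deg n a = deg_of_order n (n %/ gcdn a n).
Proof.
by move=> lt_an; rewrite pg_deg_order ?n_gt0 ?prefix_squarefree ?dvdn_gcdr.
Qed.

Lemma prefix_prod_gt1 j : 0 < j <= r -> 1 < prefix_prod p j.
Proof.
case: j => [//|j] j_range; rewrite prefix_prodS.
apply: leq_trans (prime_gt1 (p_prime j_range)) _.
by rewrite leq_pmull // prefix_prod_gt0 //; lia.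
Qed.

Lemma suffix_split s : 2 <= s <= r ->
  n = prefix_prod p s.-1 * \prod_(s <= i < r.+1) p i.
Proof. by case/andP=> le_2s le_sr; rewrite /n (@prefix_prod_split _ _ s) //; lia. Qed.

Lemma suffix_lt s : 2 <= s <= r -> \prod_(s <= i < r.+1) p i < n.
Proof.
move=> s_range; have def_n := suffix_split s_range.
have E_gt0 : 0 < \prod_(s <= i < r.+1) p i.
  by move: n_gt0; rewrite def_n muln_gt0 => /andP[].
by rewrite def_n ltn_Pmull // prefix_prod_gt1 //; lia.
Qed.

Lemma suffix_deg s : 2 <= s <= r ->
  pg_deg n (\prod_(s <= i < r.+1) p i) = deg_of_order n (prefix_prod p s.-1).
Proof.
move=> s_range; rewrite pg_deg_prefix ?suffix_lt //; congr deg_of_order.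
have def_n := suffix_split s_range.
have /gcdn_idPl -> : \prod_(s <= i < r.+1) p i %| n by rewrite def_n dvdn_mull.
by rewrite {1}def_n mulnK // lt0n; apply/eqP => E0; move: n_gt0; rewrite def_n E0 muln0.
Qed.

Lemma pg_deg_ge_prefix a : 1 < r -> a < n ->
  exists2 k, 0 < k < r & deg_of_order n (prefix_prod p k) <= pg_deg n a.
Proof.
move=> lt_1r lt_an; rewrite pg_deg_prefix //.
have dvd_m : n %/ gcdn a n %| n by rewrite dvdn_div ?dvdn_gcdr.
have [k le_kr small] := divisor_totient_smaller (leqnn r) dvd_m.
have le_deg := deg_of_order_smaller n_gt0 (prefix_prod_dvd p le_kr) dvd_m small.
have [k_range|k_end] := boolP (0 < k < r); first by exists k.
exists 1 => //; apply: leq_trans le_deg.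
have -> : deg_of_order n (prefix_prod p k) = n.-1.
  have [->|->] : k = 0 \/ k = r by lia.
    by rewrite prefix_prod0 deg_of_order1.
  exact: deg_of_order_id n_gt0.
have pr_p1 : prime (p 1) by apply: p_prime; lia.
have dvd_p1 : prefix_prod p 1 %| n := prefix_prod_dvd p (ltnW lt_1r).
have p1E : prefix_prod p 1 = p 1 by rewrite prefix_prodS prefix_prod0 mul1n.
rewrite p1E in dvd_p1 *; exact: deg_of_order_prime n_gt0 pr_p1 dvd_p1.
Qed.

End SquarefreeProduct.

Lemma bigmin_leq (s : seq nat) d (F : nat -> nat) x :
  x \in s -> \big[minn/d]_(i <- s) F i <= F x.
Proof.
elim: s => [//|y s IH]; rewrite in_cons big_cons => /orP[/eqP ->|x_in].
  exact: geq_minl.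
exact: leq_trans (geq_minr _ _) (IH x_in).
Qed.

Lemma bigmin_leq_default (s : seq nat) d (F : nat -> nat) :
  \big[minn/d]_(i <- s) F i <= d.
Proof.
elim: s => [|y s IH]; rewrite ?big_nil ?big_cons //.
exact: leq_trans (geq_minr _ _) IH.
Qed.

Lemma leq_bigmin (s : seq nat) d (F : nat -> nat) x :
  x <= d -> (forall i, i \in s -> x <= F i) -> x <= \big[minn/d]_(i <- s) F i.
Proof.
move=> le_xd le_xF; rewrite big_seq_cond.
apply: (big_ind (fun y => x <= y)) => // [y z|i /andP[i_in _]]; last exact: le_xF.
by rewrite leq_min => -> ->.
Qed.

Unset Implicit Arguments.

Theorem lemma3p1 (r : nat) (p : nat -> nat) :
  3 <= r ->
  (forall i, 1 <= i <= r -> prime (p i)) ->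
  (forall i, 1 <= i < r -> p i < p i.+1) ->
  pg_mindeg (\prod_(1 <= i < r.+1) p i) =
  \big[minn/(\prod_(1 <= i < r.+1) p i)]_(2 <= s < r.+1)
     pg_deg (\prod_(1 <= i < r.+1) p i) (\prod_(s <= i < r.+1) p i).
Proof.
move=> le_3r p_prime p_incr; have lt_1r : 1 < r by lia.
rewrite -/(prefix_prod p r); set n := prefix_prod p r.
rewrite /pg_mindeg -(big_mkord (op := minn) (idx := n) xpredT (pg_deg n)).
apply/eqP; rewrite eqn_leq; apply/andP; split.
  (* each p_s ... p_r is a vertex *)
  apply: leq_bigmin => [|s]; first exact: bigmin_leq_default.
  rewrite mem_index_iota ltnS => s_range.
  by apply: bigmin_leq; rewrite mem_index_iota suffix_lt.
apply: leq_bigmin => [|a]; first exact: bigmin_leq_default.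
rewrite mem_index_iota => lt_an.
have [k k_range le_deg] := pg_deg_ge_prefix p_prime p_incr lt_1r lt_an.
have k1_range : 2 <= k.+1 <= r by lia.
rewrite -[k]/(k.+1.-1) -(suffix_deg p_prime p_incr k1_range) in le_deg.
by apply: leq_trans le_deg; apply: bigmin_leq; rewrite mem_index_iota; lia.
Qed.
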